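(* Let $1\le k\le n$ and let $\mathcal{G}_{k-1}$ be a nearest-neighbor graph of a storage network with node set $\mathcal{N}$ and RTT function $\tau$. If $\mathcal{C}$ is a linear storage code that is admissible on $\mathcal{G}_{k-1}$, then for every node $i\in\mathcal{N}$, \[ L_{max}^{(i)}(\mathcal{C})=\lambda_{k-1}^{(i)}. \]
   Context: A storage network consists of $n$ nodes $\mathcal{N}=\{1,\dots,n\}$ and a round-trip-time (RTT) function $\tau:\mathcal{N}\times\mathcal{N}\to\mathbb{R}_{\ge 0}$ with $\tau(i,j)=\tau(j,i)$ and $\tau(i,i)=0$. There are $k\le n$ information files $W_1,\dots,W_k$, each consisting of $\alpha$ sub-packets in a finite field $\mathcal{F}$; node $i$ stores $X_i\in\mathcal{F}^\alpha$. A linear storage code $\mathcal{C}$ is given by a $(k\alpha\times n\alpha)$ matrix $G$ over $\mathcal{F}$ of rank $k\alpha$ with $\underline{X}^T=\underline{W}^T G$ (concatenated sub-packets). File $W_j$ is decodable from $S\subseteq\mathcal{N}$ if there is a function $\varphi$ with $\varphi((X_t)_{t\in S})=W_j$ for all choices of the files. The latency $l_j^{(i)}=\min\{L\ge 0: W_j$ decodable from $\{t:\tau(t,i)\le L\}\}$, and $L_{max}^{(i)}(\mathcal{C})=\max_{j\in[k]}l_j^{(i)}$. For node $i$, $\lambda_0^{(i)}\le\dots\le\lambda_{n-1}^{(i)}$ is the sorted list of $\{\tau(j,i):j\in\mathcal{N}\}$. A nearest-neighbor graph $\mathcal{G}_{k-1}$ is a directed graph on $\mathcal{N}$ in which each node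 $i$ has incoming edges from exactly $k-1$ other nodes whose RTTs to $i$ are the $k-1$ smallest values $\lambda_1^{(i)},\dots,\lambda_{k-1}^{(i)}$ (ties broken arbitrarily, so several such graphs may exist); these $k-1$ nodes are the neighbors of $i$. A code is admissible on a directed graph $\mathcal{D}$ on $\mathcal{N}$ if for every node $i$ and every $j\in[k]$, $W_j$ is decodable from $\{i\}$ together with the nodes having an edge into $i$ in $\mathcal{D}$. *)

From HB Require Import structures.
From mathcomp Require Import all_boot all_order all_algebra.
From mathcomp Require Import classical_sets reals.
Set Implicit Arguments. Unset Strict Implicit. Unset Printing Implicit Defensive.
Import Order.TTheory GRing.Theory Num.Theory.
Local Open Scope ring_scope.

(* The concatenated file vector W is a row vector of length k*alpha, sub-packet a
   of file j being entry (mxvec_index j a) = j*alpha + a; likewise X = W *m G,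
   node t storing entries t*alpha + a. *)

Section Code.
Variables (F : fieldType) (n k alpha : nat).

Definition file (W : 'rV[F]_(k * alpha)) (j : 'I_k) : 'rV[F]_alpha :=
  \row_(a < alpha) W 0 (mxvec_index j a).

Definition stored (G : 'M[F]_(k * alpha, n * alpha)) (W : 'rV[F]_(k * alpha))
  (t : 'I_n) : 'rV[F]_alpha :=
  \row_(a < alpha) (W *m G) 0 (mxvec_index t a).

Definition decodable (G : 'M[F]_(k * alpha, n * alpha)) (j : 'I_k) (S : {set 'I_n}) :=
  exists phi : ({t : 'I_n | t \in S} -> 'rV[F]_alpha) -> 'rV[F]_alpha,
    forall W : 'rV[F]_(k * alpha),
      phi (fun t => stored G W (val t)) = file W j.

(* A code is admissible on the directed graph whose in-neighbours of i are nbr i. *)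
Definition admissible (G : 'M[F]_(k * alpha, n * alpha)) (nbr : 'I_n -> {set 'I_n}) :=
  forall (i : 'I_n) (j : 'I_k), decodable G j (i |: nbr i).
End Code.

Section Latency.
Variables (R : realType) (n : nat) (tau : 'I_n -> 'I_n -> R).

(* lambda_m^(i): m-th element (from 0) of the sorted list of {tau(j,i) : j in N}. *)
Definition lambdas (i : 'I_n) : seq R := sort <=%R [seq tau t i | t <- enum 'I_n].
Definition lambda (i : 'I_n) (m : nat) : R := nth 0 (lambdas i) m.

Definition nn_graph (k : nat) (nbr : 'I_n -> {set 'I_n}) :=
  forall i : 'I_n,
    [/\ i \notin nbr i, #|nbr i| = k.-1 &
        sort <=%R [seq tau t i | t <- enum (nbr i)] = [seq lambda i m | m <- iota 1 k.-1]].

Variables (F : fieldType) (k alpha : nat).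

Definition latency (G : 'M[F]_(k * alpha, n * alpha)) (i : 'I_n) (j : 'I_k) : R :=
  inf [set L : R | 0 <= L /\ decodable G j [set t | tau t i <= L]].

Definition Lmax (G : 'M[F]_(k * alpha, n * alpha)) (i : 'I_n) : R :=
  \big[Num.max/0]_(j < k) latency G i j.
End Latency.

From HB Require Import structures.
From mathcomp Require Import all_boot all_order all_algebra.
From mathcomp Require Import classical_sets reals boolp.
Set Implicit Arguments. Unset Strict Implicit. Unset Printing Implicit Defensive.
Import Order.TTheory GRing.Theory Num.Theory.
Local Open Scope ring_scope.

(* Node i and its k - 1 nearest neighbours all lie within RTT lambda_(k-1) of i,
   so admissibility makes every file decodable at latency lambda_(k-1).
   Conversely, at most k - 1 nodes lie strictly closer than lambda_(k-1); if every
   file were decodable from them, the k*alpha symbols of W would be determined by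
   (k-1)*alpha stored symbols, which counting over the finite field rules out. *)

Lemma card_set_count (T : finType) (P : pred T) : #|[set t | P t]| = count P (enum T).
Proof.
rewrite -size_filter.
have /card_uniqP <- : uniq (filter P (enum T)) by rewrite filter_uniq ?enum_uniq.
by apply: eq_card => t; rewrite inE mem_filter mem_enum andbT.
Qed.

Lemma sorted_count_lt_nth (d : Order.disp_t) (T : porderType d) (x0 : T) (s : seq T) m :
  sorted <=%O s -> (count (fun x => x < nth x0 s m)%O s <= m)%N.
Proof.
move=> s_sorted; set P := (fun x => _).
have [m_lt | m_ge] := ltnP m (size s); last exact: leq_trans (count_size _ _) m_ge.
have nth_mono p : (m <= p < size s)%N -> (nth x0 s m <= nth x0 s p)%O.
  by case/andP=> mp ps; apply: (sorted_leq_nth le_trans lexx) => //; rewrite inE.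
have drop0 : count P (drop m s) = 0%N.
  apply/eqP; rewrite -leqn0 leqNgt -has_count; apply/hasPn => x /(nthP x0)[p].
  rewrite size_drop nth_drop => p_lt <-; rewrite /P le_gtF // nth_mono //.
  by rewrite leq_addr -ltn_subRL.
rewrite -(cat_take_drop m s) count_cat drop0 addn0.
by apply: leq_trans (count_size _ _) _; rewrite size_take m_lt.
Qed.

Section Decoding.
Variables (F : fieldType) (n k alpha : nat) (G : 'M[F]_(k * alpha, n * alpha)).

Lemma decodableS j (S S' : {set 'I_n}) : S \subset S' -> decodable G j S -> decodable G j S'.
Proof.
move=> /fintype.subsetP sSS' [phi phiP].
by exists (fun X => phi (fun t => X (exist _ (val t) (sSS' _ (valP t))))).
Qed.

Lemma stored_injective (S : {set 'I_n}) : (forall j, decodable G j S) ->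
  injective (fun W => [ffun t : {t | t \in S} => stored G W (val t)]).
Proof.
move=> decS W W' /ffunP eqWW'; apply/rowP => x.
have [j a] := mxvec_indexP x; have [phi phiP] := decS j.
have eqX : (fun t : {t | t \in S} => stored G W (val t)) = (fun t => stored G W' (val t)).
  by apply: funext => t; have := eqWW' t; rewrite !ffunE.
by have /rowP /(_ a) := phiP W; rewrite eqX phiP !mxE.
Qed.

End Decoding.

Section Counting.
Variables (F : finFieldType) (n k alpha : nat) (G : 'M[F]_(k * alpha, n * alpha)).
Hypothesis alpha_gt0 : (0 < alpha)%N.

Lemma decodable_card_leq (S : {set 'I_n}) : (forall j, decodable G j S) -> (k <= #|S|)%N.
Proof.
move=> /stored_injective/leq_card.
rewrite card_ffun !card_mx card_sig !mul1n -expnM leq_exp2l ?card_finNzRing_gt1 //.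
by rewrite (eq_card (B := S)) // mulnC leq_pmul2l.
Qed.

Lemma exists_undecodable (S : {set 'I_n}) : (#|S| < k)%N -> exists j, ~ decodable G j S.
Proof.
move=> card_lt; apply/not_existsP => undec.
have decS j : decodable G j S by apply/not_notP; exact: undec.
by move: card_lt; rewrite ltnNge decodable_card_leq.
Qed.

End Counting.

Section SortedRTT.
Variables (R : realType) (n : nat) (tau : 'I_n -> 'I_n -> R).
Hypothesis tau_ge0 : forall s t, 0 <= tau s t.

Lemma size_lambdas i : size (lambdas tau i) = n.
Proof. by rewrite size_sort size_map size_enum_ord. Qed.

Lemma lambda_ge0 i m : 0 <= lambda tau i m.
Proof.
rewrite /lambda; have [m_lt | m_ge] := ltnP m (size (lambdas tau i)); last first.
  by rewrite nth_default.
by have := mem_nth 0 m_lt; rewrite mem_sort => /mapP[t _ ->].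
Qed.

Lemma lambda_le i a b : (a <= b)%N -> (b < n)%N -> lambda tau i a <= lambda tau i b.
Proof.
move=> ab b_lt; apply: (sorted_leq_nth le_trans lexx); rewrite ?inE ?size_lambdas //.
- exact/sort_sorted/le_total.
- exact: leq_ltn_trans b_lt.
Qed.

Lemma card_tau_lt_lambda i m : (#|[set t | (tau t i < lambda tau i m)%R]| <= m)%N.
Proof.
rewrite card_set_count -(count_map (tau^~ i) (< lambda tau i m)).
rewrite -(permP (permEl (perm_sort <=%R _))).
exact/sorted_count_lt_nth/sort_sorted/le_total.
Qed.

Hypothesis tau_diag : forall t, tau t t = 0.

Lemma nn_graph_tau_le k nbr i t : nn_graph tau k nbr -> t \in i |: nbr i ->
  tau t i <= lambda tau i k.-1.
Proof.
case/(_ i)=> i_nbr card_nbr sorted_nbr; rewrite in_setU1 => /predU1P[-> | t_nbr].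
  by rewrite tau_diag lambda_ge0.
have k_lt : (k.-1 < n)%N.
  by have := max_card (i |: nbr i); rewrite cardsU1 i_nbr card_nbr card_ord.
have : tau t i \in sort <=%R [seq tau s i | s <- enum (nbr i)].
  by rewrite mem_sort map_f ?mem_enum.
rewrite sorted_nbr => /mapP[m]; rewrite mem_iota => /andP[_ m_lt] ->.
by apply: lambda_le k_lt; rewrite -ltnS -add1n.
Qed.

End SortedRTT.

Section Latency.
Variables (R : realType) (n : nat) (tau : 'I_n -> 'I_n -> R).
Variables (F : fieldType) (k alpha : nat) (G : 'M[F]_(k * alpha, n * alpha)).
Variables (i : 'I_n) (j : 'I_k).

Lemma latency_le L : 0 <= L -> decodable G j [set t | tau t i <= L] ->
  latency tau G i j <= L.
Proof. by move=> L_ge0 decL; apply: ge_inf => //; exists 0 => x []. Qed.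

Lemma latency_ge L L' : 0 <= L' -> decodable G j [set t | tau t i <= L'] ->
  ~ decodable G j [set t | tau t i < L] -> L <= latency tau G i j.
Proof.
move=> L'_ge0 decL' undecL; apply: lb_le_inf; first by exists L'.
move=> M [_ decM]; rewrite leNgt; apply/negP => ML; apply: undecL.
apply: decodableS decM; apply/fintype.subsetP => t; rewrite !inE => tM.
exact: le_lt_trans ML.
Qed.

End Latency.

Theorem proposition2 (R : realType) (F : finFieldType) (n k alpha : nat)
  (tau : 'I_n -> 'I_n -> R)
  (tau_sym : forall i j, tau i j = tau j i)
  (tau_diag : forall i, tau i i = 0)
  (tau_ge0 : forall i j, 0 <= tau i j)
  (hk1 : (1 <= k)%N) (hkn : (k <= n)%N) (halpha : (0 < alpha)%N)
  (G : 'M[F]_(k * alpha, n * alpha)) (hG : \rank G = (k * alpha)%N)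
  (nbr : 'I_n -> {set 'I_n}) (hnn : nn_graph tau k nbr)
  (hadm : admissible G nbr) :
  forall i : 'I_n, Lmax tau G i = lambda tau i k.-1.
Proof.
move=> i; set lam := lambda tau i k.-1.
have lam_ge0 : 0 <= lam := lambda_ge0 tau_ge0 i k.-1.
have dec_lam j : decodable G j [set t | tau t i <= lam].
  apply: decodableS (hadm i j); apply/fintype.subsetP => t t_nbr.
  by rewrite inE (nn_graph_tau_le tau_ge0 tau_diag hnn t_nbr).
have [j undec] : exists j, ~ decodable G j [set t | tau t i < lam].
  apply: (exists_undecodable G halpha).
  by rewrite (leq_ltn_trans (card_tau_lt_lambda tau i k.-1)) ?ltn_predL.
apply/le_anti/andP; split.
  by apply: bigmax_le => // j' _; apply: latency_le.
apply: le_trans (latency_ge lam_ge0 (dec_lam j) undec) _.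
by rewrite /Lmax (bigmaxD1 j) // le_max lexx.
Qed.
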